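(* Let $p>3$ be a prime and let $d\in\mathbb{Z}$. Write $n=(p-1)/2$ and define $$S(d,p)=\det\left[\left(\frac{j^2+dk^2}{p}\right)\right]_{1\le j,k\le n},\qquad T(d,p)=\det\left[\left(\frac{j^2+dk^2}{p}\right)\right]_{0\le j,k\le n}.$$ (i) Let $\bar S(d,p)$ be the determinant obtained from $\det\left[\left(\frac{j^2+dk^2}{p}\right)\right]_{1\le j,k\le n}$ by replacing all the entries in the first row (the row $j=1$) by $1$. If $\left(\frac dp\right)=1$, then $\bar S(d,p)=-S(d,p)$. If $\left(\frac dp\right)=-1$, then $$\bar S(d,p)=\frac{2}{p-1}T(d,p)=\frac{p-1}{2}\det\left[\left(\frac{j^2+dk^2}{p}\right)\right]_{2\le j,k\le n}.$$ (ii) For any integer $m$ with $(p-1)/2<m<p-1$, the determinant $T_m(d,p)=\det\left[(j^2+dk^2)^m\right]_{0\le j,k\le (p-1)/2}$ satisfies $T_m(d,p)\equiv 0\pmod p$.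
   Context: $\left(\frac{\cdot}{p}\right)$ denotes the Legendre symbol modulo $p$ (with $\left(\frac{0}{p}\right)=0$). *)

From mathcomp Require Import all_boot all_order all_algebra.
Set Implicit Arguments. Unset Strict Implicit. Unset Printing Implicit Defensive.
Import Order.TTheory GRing.Theory Num.Theory.
Local Open Scope ring_scope.

Definition legendre (a : int) (p : nat) : int :=
  if (p%:Z %| a)%Z then 0
  else if [exists x : 'I_p, ((x%:Z) ^+ 2 == a %[mod p%:Z])%Z] then 1 else -1.

Definition leg_entry (d : int) (p j k : nat) : int :=
  legendre ((j%:Z) ^+ 2 + d * (k%:Z) ^+ 2) p.

(* The N x N matrix [((j^2 + d k^2)/p)]_{off <= j,k <= off + N - 1};
   matrix index i : 'I_N corresponds to j = i + off. *)
Definition leg_mx (d : int) (p off N : nat) : 'M[int]_N :=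
  \matrix_(i < N, k < N) leg_entry d p (i + off) (k + off).

Definition leg_mx_bar (d : int) (p N : nat) : 'M[int]_N :=
  \matrix_(i < N, k < N)
    (if (i : nat) == 0%N then 1 else leg_entry d p i.+1 k.+1).

Definition pow_mx (d : int) (m N : nat) : 'M[int]_N :=
  \matrix_(i < N, k < N) ((i%:Z) ^+ 2 + d * (k%:Z) ^+ 2) ^+ m.

From mathcomp Require Import all_boot all_order all_algebra finfield.
From mathcomp Require Import zify ring.
Set Implicit Arguments. Unset Strict Implicit. Unset Printing Implicit Defensive.
Import Order.TTheory GRing.Theory Num.Theory.
Local Open Scope ring_scope.

(** Reduce everything modulo p.  By Euler's criterion ((a/p) = a^n in F_p,
    n = (p-1)/2), and since power sums over F_p vanish unless the exponent is
    a positive multiple of p - 1, one gets sum_x (a + b x^2)^n = - b^n.  As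
    x |-> x^2 hits every nonzero square twice, every row and every column of
    [((j^2 + d k^2)/p)]_{1<=j,k<=n} sums to -(1 + (d/p))/2 modulo p, hence
    exactly, the sums being small.  Part (i) then follows by adding rows (or
    columns) of the matrices to one of them.  For part (ii) the same power
    sums show that the vector (t, 1, ..., 1) with t = - n (1 + C(m, n) d^n)
    lies in the kernel of [(j^2 + d k^2)^m] modulo p. *)

Section DeterminantRowOperations.
Variable R : comPzRingType.

Lemma cofactor_eq_off_row n (A B : 'M[R]_n) i0 :
  (forall i j, i != i0 -> A i j = B i j) -> forall j, cofactor A i0 j = cofactor B i0 j.
Proof.
move=> AB j; rewrite /cofactor; congr (_ * \det _).
by apply/matrixP => i k; rewrite !mxE AB // eq_sym neq_lift.
Qed.

Lemma expand_det_row_sum n (A : 'M[R]_n) (P : pred 'I_n) i0 : P i0 ->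
  \det A = \sum_j (\sum_(i | P i) A i j) * cofactor A i0 j.
Proof.
move=> Pi0.
have adj_row i : \sum_j A i j * cofactor A i0 j = \det A *+ (i == i0).
  have /matrixP/(_ i i0) := mul_mx_adj A; rewrite !mxE => <-.
  by apply: eq_bigr => j _; rewrite mxE.
under eq_bigr do rewrite mulr_suml.
rewrite exchange_big (bigD1 i0) //= adj_row eqxx big1 ?addr0 // => i /andP[_].
by rewrite adj_row => /negbTE ->.
Qed.

Lemma expand_det_col_rowsum n (A : 'M[R]_n) j0 :
  \det A = \sum_i (\sum_j A i j) * cofactor A i j0.
Proof.
rewrite -det_tr (expand_det_row_sum _ (P := xpredT) (i0 := j0)) //.
by apply: eq_bigr => i _; rewrite cofactor_tr; under eq_bigr do rewrite mxE.
Qed.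

Lemma det_ones_row_colsum n (A B : 'M[R]_n) i0 c :
    (forall i j, i != i0 -> A i j = B i j) -> (forall j, B i0 j = 1) ->
    (forall j, \sum_i A i j = c) ->
  \det A = c * \det B.
Proof.
move=> AB B1 colA; rewrite (expand_det_row_sum A (P := xpredT) (i0 := i0)) //.
rewrite (expand_det_row B i0) mulr_sumr; apply: eq_bigr => j _.
by rewrite colA B1 mul1r (cofactor_eq_off_row AB).
Qed.

Lemma det_oppr_row n (A B : 'M[R]_n) i0 :
    (forall i j, i != i0 -> A i j = B i j) -> (forall j, A i0 j = - B i0 j) ->
  \det A = - \det B.
Proof.
move=> AB A_B; rewrite (expand_det_row A i0) (expand_det_row B i0) -sumrN.
by apply: eq_bigr => j _; rewrite A_B (cofactor_eq_off_row AB) mulNr.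
Qed.

End DeterminantRowOperations.

Section FinFieldPowerSums.
Variable F : finFieldType.

Lemma expf_card_pred (x : F) : x != 0 -> x ^+ #|F|.-1 = 1.
Proof.
move=> x_neq0; apply: (mulfI x_neq0); rewrite mulr1 -exprS prednK ?expf_card //.
exact: ltnW (finNzRing_gt1 F).
Qed.

Lemma sum_expr_eq0 (e : nat) : (0 < e < #|F|.-1)%N -> \sum_(x : F) x ^+ e = 0.
Proof.
case/andP => e_gt0 e_lt.
have [a /andP[a_neq0 ae_neq1] | ae1] := pickP (fun a : F => (a != 0) && (a ^+ e != 1)).
  have scale : \sum_(x : F) x ^+ e = a ^+ e * \sum_(x : F) x ^+ e.
    rewrite mulr_sumr (reindex_inj (mulfI a_neq0)) /=.
    by apply: eq_bigr => x _; rewrite exprMn.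
  apply/eqP; move/eqP: scale; rewrite -subr_eq0 -{1}[\sum_x _]mul1r -mulrBl.
  by rewrite mulf_eq0 subr_eq0 eq_sym (negbTE ae_neq1).
suff : (#|predC1 (0 : F)%R| <= e)%N by rewrite cardC1 leqNgt e_lt.
rewrite cardE; apply: max_unity_roots e_gt0 _ (enum_uniq _).
apply/allP => x; rewrite mem_enum unity_rootE inE => x_neq0.
by have /negbT := ae1 x; rewrite x_neq0 negbK.
Qed.

End FinFieldPowerSums.

Lemma norm_legendre_le1 (a : int) (p : nat) : `|legendre a p| <= 1.
Proof. by rewrite /legendre; case: ifP => _ //; case: ifP. Qed.

Lemma norm_sum_legendre_le (p m : nat) (a : 'I_m -> int) :
  `|\sum_i legendre (a i) p| <= m%:Z.
Proof.
apply: le_trans (ler_norm_sum _ _ _) _.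
have -> : m%:Z = \sum_(i < m) 1 by rewrite sumr_const card_ord natz.
by apply: ler_sum => i _; apply: norm_legendre_le1.
Qed.

Section PrimeField.
Variable N : nat.
Local Notation n := N.+1.
Local Notation p := n.*2.+1.
Hypothesis p_prime : prime p.
Local Notation F := 'F_p.

Lemma Fp_nat_neq0 (u : nat) : (0 < u < p)%N -> (u%:R : F) != 0.
Proof.
case/andP => u_gt0 u_lt; rewrite -(dvdn_pcharf (pchar_Fp p_prime)).
by apply/negP => /(dvdn_leq u_gt0); rewrite leqNgt u_lt.
Qed.

Lemma Fp_nat_inj (u v : nat) : (u < p)%N -> (v < p)%N -> (u%:R : F) = v%:R -> u = v.
Proof. by move=> u_lt v_lt /(congr1 val); rewrite /= !val_Fp_nat // !modn_small. Qed.

Lemma Fp_intr_eq (z w : int) : ((z%:~R : F) == w%:~R) = (z == w %[mod p%:Z])%Z.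
Proof. by rewrite eqz_mod_dvd (dvdz_pcharf (pchar_Fp p_prime)) rmorphB subr_eq0. Qed.

Lemma intr_Fp_inj (z w : int) : `|z - w| < p%:Z -> (z%:~R : F) = w%:~R -> z = w.
Proof.
move=> small /eqP; rewrite Fp_intr_eq eqz_mod_dvd => p_dvd.
apply/eqP; rewrite -subr_eq0 -absz_eq0; apply: contraTT small; rewrite -lt0n => nz.
by rewrite -leNgt -abszE lez_nat dvdn_leq.
Qed.

Lemma Fp_two_neq0 : (2%:R : F) != 0.
Proof. by apply: (@Fp_nat_neq0 2); lia. Qed.

Lemma intr_Fp_double_inj (z w : int) :
  `|z - w| < p%:Z -> (z%:~R : F) *+ 2 = w%:~R *+ 2 -> z = w.
Proof.
move=> small; rewrite -(mulr_natr (z%:~R)) -(mulr_natr (w%:~R)).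
by move=> /(mulIf Fp_two_neq0); apply: intr_Fp_inj.
Qed.

Lemma expf_Fp_pred (x : F) : x != 0 -> x ^+ n.*2 = 1.
Proof. by move/expf_card_pred; rewrite card_Fp. Qed.

Lemma Fp_nat_sqr_expr_half (u : nat) : (0 < u < p)%N -> ((u%:R : F) ^+ 2) ^+ n = 1.
Proof. by move/Fp_nat_neq0 => u_neq0; rewrite -exprM mul2n expf_Fp_pred. Qed.

Lemma Fp_nat_sqr_inj (u v : nat) : (0 < u <= n)%N -> (0 < v <= n)%N ->
  (u%:R : F) ^+ 2 = v%:R ^+ 2 -> u = v.
Proof.
move=> u_range v_range /eqP; rewrite -subr_eq0 subr_sqr mulf_eq0 -natrD.
have uv_lt : (0 < u + v < p)%N by lia.
rewrite (negbTE (Fp_nat_neq0 uv_lt)) orbF subr_eq0 => /eqP.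
by apply: Fp_nat_inj; lia.
Qed.

Lemma sum_Fp_nat (g : F -> F) : \sum_(x : F) g x = \sum_(j < p) g j%:R.
Proof.
have inj : injective (fun j : 'I_p => (j%:R : F)).
  by move=> i j /Fp_nat_inj eq_ij; apply: val_inj; apply: eq_ij.
by rewrite (reindex _ (onW_bij _ (inj_card_bij inj _))) // card_Fp // card_ord.
Qed.

Lemma sum_sqr (h : F -> F) :
  \sum_(x : F) h (x ^+ 2) = h 0 + (\sum_(j < n) h (j.+1%:R ^+ 2)) *+ 2.
Proof.
rewrite sum_Fp_nat -(big_mkord xpredT (fun j => h (j%:R ^+ 2))).
rewrite (big_cat_nat (n := n.+1)) //=; last by lia.
rewrite big_ltn // expr0n -addrA mulr2n; congr (_ + (_ + _)).
  by rewrite (big_addn 0 n.+1 1) big_mkord; apply: eq_bigr => j _; rewrite addn1.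
rewrite big_nat_rev (big_addn 0 p n.+1) (_ : p - n.+1 = n)%N; last by lia.
rewrite big_mkord; apply: eq_bigr => j _.
rewrite (_ : n.+1 + p - (j + n.+1).+1 = p - j.+1)%N; last by lia.
by rewrite natrB ?pchar_Fp_0 ?sub0r ?sqrrN //; have := ltn_ord j; lia.
Qed.

Lemma sum_sqr_expr (i : nat) : (i <= n)%N ->
  \sum_(x : F) (x ^+ 2) ^+ i = if i == n then -1 else 0.
Proof.
move=> le_in; under eq_bigr do rewrite -exprM mul2n.
have [->|ne_in] := eqVneq i n.
  rewrite (bigD1 0) //= expr0n double_eq0 /= add0r.
  rewrite (eq_bigr (fun _ => 1)) => [|x /expf_Fp_pred //].
  by rewrite sumr_const cardC1 card_Fp //; apply/eqP; rewrite -addr_eq0 natr1 pchar_Fp_0.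
have [->|i_gt0] := posnP i.
  by rewrite (eq_bigr (fun _ => 1)) // sumr_const card_Fp // pchar_Fp_0.
rewrite (@sum_expr_eq0 F) // card_Fp //; lia.
Qed.

Lemma sum_quad (a b : F) : \sum_(x : F) (a + b * x ^+ 2) ^+ n = - b ^+ n.
Proof.
under eq_bigr do rewrite exprDn.
rewrite exchange_big /=.
under eq_bigr => i _.
  rewrite (eq_bigr (fun x => a ^+ (n - i) * b ^+ i *+ 'C(n, i) * (x ^+ 2) ^+ i));
    last by move=> x _; rewrite exprMn mulrA mulrnAl.
  rewrite -mulr_sumr sum_sqr_expr; last exact: leq_ord i.
  over.
rewrite big_ord_recr /= big1 ?add0r => [|i _]; last first.
  by rewrite ltn_eqF // mulr0.
by rewrite subnn expr0 mul1r binn mulr1n eqxx mulrN1.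
Qed.

Lemma sum_half_sqr_quad (u v : F) :
  (\sum_(j < n) (v + u * j.+1%:R ^+ 2) ^+ n) *+ 2 = - u ^+ n - v ^+ n.
Proof.
have := sum_sqr (fun y => (v + u * y) ^+ n).
rewrite sum_quad mulr0 addr0 => ->.
by rewrite addrC addKr.
Qed.

Lemma euler_criterion (a : int) : ((legendre a p)%:~R : F) = (a%:~R : F) ^+ n.
Proof.
have p_dvdE := dvdz_pcharf (pchar_Fp p_prime).
rewrite /legendre; case: ifPn => [|p_ndvd_a].
  by rewrite p_dvdE => /eqP ->; rewrite expr0n.
have a_neq0 : (a%:~R : F) != 0 by rewrite -p_dvdE.
case: ifPn => [/existsP[x] | nonres].
  rewrite -Fp_intr_eq rmorphXn /= -pmulrn => /eqP ax.
  have x_range : (0 < x < p)%N.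
    by rewrite ltn_ord andbT lt0n; apply: contra a_neq0 => /eqP x0; rewrite -ax x0 expr0n.
  by rewrite -ax Fp_nat_sqr_expr_half.
have an_neq1 : (a%:~R : F) ^+ n != 1.
  (* Otherwise a, 1^2, ..., n^2 would be n + 1 distinct roots of X^n - 1. *)
  apply/eqP => an1.
  pose rs := (a%:~R : F) :: [seq (j.+1%:R : F) ^+ 2 | j <- iota 0 n].
  suff : (size rs <= n)%N by rewrite /= size_map size_iota ltnn.
  apply: max_unity_roots => //.
    apply/allP => y; rewrite inE unity_rootE => /predU1P[-> | /mapP[j]]; first by rewrite an1.
    by rewrite mem_iota => j_lt ->; rewrite Fp_nat_sqr_expr_half //; lia.
  rewrite cons_uniq map_inj_in_uniq ?iota_uniq ?andbT => [|i j]; last first.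
    rewrite !mem_iota => i_lt j_lt sq_eq.
    have i_range : (0 < i.+1 <= n)%N by lia.
    have j_range : (0 < j.+1 <= n)%N by lia.
    by case: (Fp_nat_sqr_inj i_range j_range sq_eq).
  apply/mapP => -[j]; rewrite mem_iota => j_lt a_sqr.
  have j_lt_p : (j.+1 < p)%N by lia.
  move/existsP: nonres; apply; exists (Ordinal j_lt_p).
  by rewrite -Fp_intr_eq rmorphXn /= -pmulrn a_sqr.
have : ((a%:~R : F) ^+ n - 1) * ((a%:~R : F) ^+ n + 1) = 0.
  by rewrite -subr_sqr expr1n -exprM muln2 expf_Fp_pred // subrr.
by move/eqP; rewrite mulf_eq0 subr_eq0 (negbTE an_neq1) addr_eq0 => /eqP ->.
Qed.

Lemma leg_entry_Fp (d : int) (j k : nat) :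
  ((leg_entry d p j k)%:~R : F) = (j%:R ^+ 2 + d%:~R * k%:R ^+ 2) ^+ n.
Proof. by rewrite euler_criterion rmorphD rmorphM /= !rmorphXn /= -!pmulrn. Qed.

Lemma leg_entry_col0 (d : int) (j : nat) : (0 < j < p)%N -> leg_entry d p j 0 = 1.
Proof.
move=> j_range; apply: intr_Fp_inj.
  by have : `|leg_entry d p j 0| <= 1 := norm_legendre_le1 _ _; lia.
by rewrite leg_entry_Fp expr0n mulr0 addr0 Fp_nat_sqr_expr_half.
Qed.

Lemma leg_entry_row0 (d : int) (k : nat) : (0 < k < p)%N ->
  leg_entry d p 0 k = legendre d p.
Proof.
move=> k_range; apply: intr_Fp_inj.
  have : `|leg_entry d p 0 k| <= 1 := norm_legendre_le1 _ _.
  by have := norm_legendre_le1 d p; lia.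
by rewrite leg_entry_Fp euler_criterion expr0n add0r exprMn Fp_nat_sqr_expr_half // mulr1.
Qed.

Lemma sum_leg_entry_col_Fp (d : int) (k : nat) : (0 < k < p)%N ->
  ((\sum_(j < n) leg_entry d p j.+1 k)%:~R : F) *+ 2 = - 1 - (legendre d p)%:~R.
Proof.
move=> k_range; rewrite rmorph_sum /=.
under eq_bigr do rewrite leg_entry_Fp addrC -[_.+1%:R ^+ 2]mul1r.
by rewrite sum_half_sqr_quad expr1n exprMn Fp_nat_sqr_expr_half // mulr1 euler_criterion.
Qed.

Lemma sum_leg_entry_row_Fp (d : int) (j : nat) : (0 < j < p)%N ->
  ((\sum_(k < n) leg_entry d p j k.+1)%:~R : F) *+ 2 = - (legendre d p)%:~R - 1.
Proof.
move=> j_range; rewrite rmorph_sum /=; under eq_bigr do rewrite leg_entry_Fp.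
by rewrite sum_half_sqr_quad Fp_nat_sqr_expr_half // euler_criterion.
Qed.

Lemma sum_leg_entry_col_residue (d : int) (k : nat) : (0 < k < p)%N ->
  legendre d p = 1 -> \sum_(j < n) leg_entry d p j.+1 k = -1.
Proof.
move=> k_range d_residue; apply: intr_Fp_double_inj.
  by have : `|\sum_(j < n) leg_entry d p j.+1 k| <= n%:Z := norm_sum_legendre_le _ _; lia.
by rewrite sum_leg_entry_col_Fp // d_residue rmorphN1 rmorph1 mulr2n.
Qed.

Lemma sum_leg_entry_col_nonresidue (d : int) (k : nat) : (0 < k < p)%N ->
  legendre d p = -1 -> \sum_(j < n) leg_entry d p j.+1 k = 0.
Proof.
move=> k_range d_nonresidue; apply: intr_Fp_double_inj.
  by have : `|\sum_(j < n) leg_entry d p j.+1 k| <= n%:Z := norm_sum_legendre_le _ _; lia.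
by rewrite sum_leg_entry_col_Fp // d_nonresidue rmorphN1 subrr rmorph0 mul0rn.
Qed.

Lemma sum_leg_entry_row_nonresidue (d : int) (j : nat) : (0 < j < p)%N ->
  legendre d p = -1 -> \sum_(k < n) leg_entry d p j k.+1 = 0.
Proof.
move=> j_range d_nonresidue; apply: intr_Fp_double_inj.
  by have : `|\sum_(k < n) leg_entry d p j k.+1| <= n%:Z := norm_sum_legendre_le _ _; lia.
by rewrite sum_leg_entry_row_Fp // d_nonresidue rmorphN1 opprK subrr rmorph0 mul0rn.
Qed.

Lemma sum_half_sqr_expr (i : nat) : (0 < i < n.*2)%N -> i != n ->
  \sum_(k < n) ((k.+1%:R : F) ^+ 2) ^+ i = 0.
Proof.
have below e : (0 < e < n)%N -> \sum_(k < n) ((k.+1%:R : F) ^+ 2) ^+ e = 0.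
  case/andP => e_gt0 e_lt; have := sum_sqr (fun y => y ^+ e).
  rewrite sum_sqr_expr ?(ltnW e_lt) // (ltn_eqF e_lt) expr0n (gtn_eqF e_gt0) add0r.
  by move/esym/eqP; rewrite -mulr_natr mulf_eq0 (negbTE Fp_two_neq0) orbF => /eqP.
case/andP => i_gt0 i_lt i_neq_n; have [i_lt_n | n_le_i] := ltnP i n.
  by apply: below; rewrite i_gt0.
transitivity (\sum_(k < n) ((k.+1%:R : F) ^+ 2) ^+ (i - n)); last by apply: below; lia.
apply: eq_bigr => k _; rewrite -{1}(subnK n_le_i) exprD Fp_nat_sqr_expr_half ?mulr1 //.
by have := ltn_ord k; lia.
Qed.

Lemma Fp_nat_sqr_expr_subn_half (j m : nat) : (j < p)%N -> (n < m)%N ->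
  ((j%:R : F) ^+ 2) ^+ m = ((j%:R : F) ^+ 2) ^+ (m - n).
Proof.
move=> j_lt n_lt_m; rewrite -{1}(subnK (ltnW n_lt_m)) exprD.
have [-> | j_gt0] := posnP j; last by rewrite Fp_nat_sqr_expr_half ?mulr1 // j_gt0.
have zero_pow : ((0%:R : F) ^+ 2) ^+ (m - n) = 0.
  by apply/eqP; rewrite !expf_eq0 subn_gt0 n_lt_m mulr0n eqxx.
by rewrite zero_pow mul0r.
Qed.

Lemma sum_half_shifted_expr (x c : F) (m : nat) : (n < m < n.*2)%N ->
  \sum_(k < n) (x + c * k.+1%:R ^+ 2) ^+ m =
    n%:R * (x ^+ m + c ^+ n * x ^+ (m - n) *+ 'C(m, n)).
Proof.
case/andP => n_lt_m m_lt; under eq_bigr do rewrite exprDn.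
rewrite exchange_big /=.
under eq_bigr => i _.
  rewrite (eq_bigr (fun k : 'I_n => x ^+ (m - i) * c ^+ i *+ 'C(m, i) *
                             ((k.+1%:R : F) ^+ 2) ^+ i)); last first.
    by move=> k _; rewrite exprMn mulrA mulrnAl.
  rewrite -mulr_sumr.
  over.
have n_ord : (n < m.+1)%N by rewrite ltnS ltnW.
rewrite (bigD1 ord0) // (bigD1 (Ordinal n_ord)) //= [X in _ + (_ + X)]big1 ?addr0; last first.
  move=> i /andP[i_neq0 i_neq_n]; rewrite sum_half_sqr_expr ?mulr0 //.
  by rewrite lt0n i_neq0; have := ltn_ord i; lia.
have ones e : (e == 0)%N || (e == n) -> \sum_(k < n) ((k.+1%:R : F) ^+ 2) ^+ e = n%:R.
  case/orP => /eqP ->; rewrite (eq_bigr (fun _ => 1)) ?sumr_const ?card_ord // => k _.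
  by rewrite Fp_nat_sqr_expr_half //; have := ltn_ord k; lia.
rewrite !ones ?eqxx ?orbT // subn0 expr0 mulr1 bin0 mulr1n.
by ring.
Qed.

Lemma dvdz_det_pow_mx (d : int) (m : nat) : (n < m < n.*2)%N ->
  (p%:Z %| \det (pow_mx d m n.+1))%Z.
Proof.
move=> m_range; set c : F := d%:~R.
set t : F := - (n%:R * (1 + c ^+ n *+ 'C(m, n))).
rewrite (dvdz_pcharf (pchar_Fp p_prime)) -det_map_mx -det_tr.
apply/det0P; exists (\row_(k < n.+1) if k == 0 then t else 1).
  by apply/eqP => /rowP /(_ (lift 0 0)); rewrite !mxE; apply/eqP/oner_neq0.
apply/rowP => j.
have entry k : (map_mx intr (pow_mx d m n.+1))^T k j = ((j%:R : F) ^+ 2 + c * k%:R ^+ 2) ^+ m.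
  by rewrite !mxE rmorphXn rmorphD rmorphM /= !rmorphXn /= -!pmulrn.
rewrite mxE big_ord_recl entry mxE eqxx (_ : (ord0 : 'I_n.+1)%:R = 0 :> F) ?mulr0n //.
rewrite expr0n mulr0 addr0.
under eq_bigr do rewrite entry mxE lift0 mul1r.
have j_lt : (j < p)%N by have := ltn_ord j; lia.
have n_lt_m : (n < m)%N by case/andP: m_range.
rewrite sum_half_shifted_expr // mxE Fp_nat_sqr_expr_subn_half //.
by rewrite /t; ring.
Qed.

Lemma det_leg_mx_bar_residue (d : int) : legendre d p = 1 ->
  \det (leg_mx_bar d p n) = - \det (leg_mx d p 1 n).
Proof.
move=> d_residue.
rewrite (det_ones_row_colsum (A := leg_mx d p 1 n) (B := leg_mx_bar d p n)
                             (i0 := ord0) (c := -1)).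
- by rewrite mulN1r opprK.
- by move=> i j; rewrite -val_eqE !mxE !addn1 => /negbTE ->.
- by move=> j; rewrite mxE.
move=> k; under eq_bigr do rewrite mxE !addn1.
by apply: sum_leg_entry_col_residue => //; have := ltn_ord k; lia.
Qed.

Lemma det_leg_mx_bar_nonresidue (d : int) : legendre d p = -1 ->
  \det (leg_mx_bar d p n) = n%:R * \det (leg_mx d p 2 N).
Proof.
move=> d_nonresidue; rewrite (expand_det_col_rowsum _ ord0) big_ord_recl.
rewrite [X in _ + X]big1 ?addr0 => [|i _]; last first.
  under eq_bigr do rewrite mxE lift0.
  by rewrite sum_leg_entry_row_nonresidue ?mul0r //; have := ltn_ord i; lia.
rewrite (eq_bigr (fun=> 1)) => [|k _]; last by rewrite mxE.
rewrite sumr_const card_ord /cofactor expr0 mul1r; congr (_ * \det _).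
by apply/matrixP => i k; rewrite !mxE !lift0 !addn2.
Qed.

Lemma det_leg_mx0_nonresidue (d : int) : legendre d p = -1 ->
  \det (leg_mx d p 0 n.+1) = n%:R * \det (leg_mx_bar d p n).
Proof.
move=> d_nonresidue; set M := leg_mx d p 0 n.+1.
have lower_rows k : \sum_(i | i != ord0) M i k = \sum_(j < n) leg_entry d p j.+1 k.
  rewrite big_mkcond big_ord_recl eqxx /= add0r.
  by apply: eq_bigr => i _; rewrite /M mxE lift0 !addn0.
rewrite (expand_det_row_sum _ (P := fun i => i != ord0) (i0 := lift ord0 ord0)) //.
rewrite big_ord_recl [X in _ + X]big1 ?addr0 => [|k _]; last first.
  by rewrite lower_rows lift0 sum_leg_entry_col_nonresidue ?mul0r //; have := ltn_ord k; lia.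
rewrite lower_rows (eq_bigr (fun=> 1)) => [|j _]; last first.
  by rewrite leg_entry_col0 //; have := ltn_ord j; lia.
rewrite sumr_const card_ord /cofactor expr1 mulN1r; congr (_ * _).
rewrite (det_oppr_row (B := leg_mx_bar d p n) (i0 := ord0)) ?opprK //.
  move=> i k; rewrite -val_eqE !mxE /= !addn0 => i_neq0.
  by rewrite (negbTE i_neq0) /bump lt0n i_neq0.
move=> k; rewrite !mxE /= leg_entry_row0 ?d_nonresidue //.
by rewrite addn0 /bump leq0n add1n; have := ltn_ord k; lia.
Qed.

End PrimeField.

Unset Implicit Arguments.
Theorem theorem1p1 (p : nat) (d : int) :
  prime p -> (3 < p)%N ->
  let n := (p.-1)./2 in
  let S := \det (leg_mx d p 1 n) in
  let T := \det (leg_mx d p 0 n.+1) in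
  let Sbar := \det (leg_mx_bar d p n) in
  let S2 := \det (leg_mx d p 2 n.-1) in
  ((legendre d p = 1 -> Sbar = - S) /\
   (legendre d p = -1 ->
      (Sbar%:~R : rat) = 2 / (p%:R - 1) * T%:~R /\
      (Sbar%:~R : rat) = (p%:R - 1) / 2 * S2%:~R))
  /\
  (forall m : nat, ((p.-1)./2 < m)%N -> (m < p.-1)%N ->
     (p%:Z %| \det (pow_mx d m n.+1))%Z).
Proof.
move=> p_prime p_gt3; cbv zeta.
have p_odd : odd p by case: (even_prime p_prime) p_gt3 => [->|].
have [N Dp] : exists N, p = N.+1.*2.+1.
  exists (p./2).-1; rewrite prednK; last by rewrite half_gt0; lia.
  by rewrite -[LHS]odd_double_half p_odd add1n.
subst p; rewrite /= doubleK.
split=> [|m m_gt m_lt]; last by apply: dvdz_det_pow_mx; rewrite ?m_gt.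
split=> [|d_nonresidue]; first exact: det_leg_mx_bar_residue.
rewrite (det_leg_mx0_nonresidue p_prime d_nonresidue).
rewrite (det_leg_mx_bar_nonresidue p_prime d_nonresidue).
rewrite !intrM rmorph_nat -(natr1 N.+1.*2) addrK -mul2n natrM.
have n_neq0 : 1 + N%:R != 0 :> rat by rewrite addrC natr1 pnatr_eq0.
by split; field.
Qed.
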